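(* Let $S$ be a semiring. If $\mathcal{A}=(A,X,Y,a_0,\delta,\omega)$ is a crisp-deterministic Mealy-type weighted automaton over $S$, then $[\![\mathcal{A}]\!]_{cd}=[\![\mathcal{A}]\!]_{1n}=[\![\mathcal{A}]\!]_{n1}=[\![\mathcal{A}]\!]_s$. If $\mathcal{A}=(A,X,Y,a_0,\delta,\omega)$ is a crisp-deterministic Moore-type weighted automaton over $S$, then $[\![\mathcal{A}]\!]_{cd}=[\![\mathcal{A}]\!]_{1n}=[\![\mathcal{A}]\!]_{n1}$.
   Context: A semiring $(S,+,\cdot,0,1)$ is a set with $(S,+,0)$ a commutative monoid, $(S,\cdot,1)$ a monoid (not necessarily commutative), $\cdot$ distributing over $+$ on both sides, and $0\cdot s=s\cdot 0=0$. $(X\times Y)^*$ is identified with pairs $(u,v)\in X^*\times Y^*$ with $|u|=|v|$; empty element $(\varepsilon,\varepsilon)$. $A,X,Y$ are finite nonempty sets. A crisp-deterministic Mealy-type (resp. Moore-type) weighted automaton is $\mathcal{A}=(A,X,Y,a_0,\delta,\omega)$ with $a_0\in A$, a transition function $\delta:A\times X\to A$, and $\omega:A\times X\times Y\to S$ (resp. $\omega:A\times Y\to S$). Write $\delta_x(a)=\delta(a,x)$, $\delta_\varepsilon(a)=a$, $\delta_{wx}(a)=\delta_x(\delta_w(a))$, and $\omega_{x,y}(a)=\omega(a,x,y)$ (resp. $\omega_y(a)=\omega(a,y)$). It is regarded as a general weighted automaton with initial weight vector $\sigma(a_0)=1$, $\sigma(a)=0$ for $a\ne a_0$, and weighted transitions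 $\hat\delta_x(a,b)=1$ if $b=\delta(a,x)$ and $0$ otherwise; for $w=z_1\cdots z_m\in X^+$ put $\hat\delta_w=\hat\delta_{z_1}\cdots\hat\delta_{z_m}$ (matrix product over $S$). cd-behavior: $[\![\mathcal{A}]\!]_{cd}(\varepsilon,\varepsilon)=1$ and for $u=x_1\cdots x_n$, $v=y_1\cdots y_n$, $n\ge1$: in the Mealy case $[\![\mathcal{A}]\!]_{cd}(u,v)=\omega_{x_1,y_1}(a_0)\cdot\omega_{x_2,y_2}(\delta_{x_1}(a_0))\cdots\omega_{x_n,y_n}(\delta_{x_1\cdots x_{n-1}}(a_0))$; in the Moore case $[\![\mathcal{A}]\!]_{cd}(u,v)=\omega_{y_1}(\delta_{x_1}(a_0))\cdot\omega_{y_2}(\delta_{x_1x_2}(a_0))\cdots\omega_{y_n}(\delta_{x_1\cdots x_n}(a_0))$. All of the following behaviors take value $\sum_{a\in A}\sigma(a)$ at $(\varepsilon,\varepsilon)$; for $u=x_1\cdots x_n$, $v=y_1\cdots y_n$, $n\ge1$: Mealy $1n$: $\sum_{(a_0',\dots,a_{n-1}')\in A^n}\sigma(a_0')\omega_{x_1,y_1}(a_0')\hat\delta_{x_1}(a_0',a_1')\omega_{x_2,y_2}(a_1')\cdots\hat\delta_{x_{n-1}}(a_{n-2}',a_{n-1}')\omega_{x_n,y_n}(a_{n-1}')$. Mealy $n1$: $\sum_{(a_0',\dots,a_{n-1}')\in A^n}\sigma(a_0')\omega_{x_1,y_1}(a_0')\hat\delta_{x_1}(a_0',a_1')\omega_{x_2,y_2}(a_1')\hat\delta_{x_1x_2}(a_0',a_2')\omega_{x_3,y_3}(a_2')\cdots\hat\delta_{x_1\cdots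 x_{n-1}}(a_0',a_{n-1}')\omega_{x_n,y_n}(a_{n-1}')$. Mealy sequential $s$: $\sum_{(a_0',\dots,a_n')\in A^{n+1}}\sigma(a_0')\omega_{x_1,y_1}(a_0')\hat\delta_{x_1}(a_0',a_1')\cdots\omega_{x_n,y_n}(a_{n-1}')\hat\delta_{x_n}(a_{n-1}',a_n')$. Moore $1n$: $\sum_{(a_0',\dots,a_n')\in A^{n+1}}\sigma(a_0')\hat\delta_{x_1}(a_0',a_1')\omega_{y_1}(a_1')\cdots\hat\delta_{x_n}(a_{n-1}',a_n')\omega_{y_n}(a_n')$. Moore $n1$: $\sum_{(a_0',\dots,a_n')\in A^{n+1}}\sigma(a_0')\hat\delta_{x_1}(a_0',a_1')\omega_{y_1}(a_1')\hat\delta_{x_1x_2}(a_0',a_2')\omega_{y_2}(a_2')\cdots\hat\delta_{x_1\cdots x_n}(a_0',a_n')\omega_{y_n}(a_n')$. *)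

(* Semiring = GRing.PzSemiRing (possibly non-commutative, 0 = 1 allowed). *)
From HB Require Import structures.
From mathcomp Require Import all_boot all_order all_algebra.
Set Implicit Arguments.
Unset Strict Implicit.
Unset Printing Implicit Defensive.
Import GRing.Theory.
Local Open Scope ring_scope.

(* Words of (X x Y)^* are represented as w : seq (X * Y), i.e. the pair
   (u, v) = (map fst w, map snd w), which automatically have equal length.
   Letters are indexed from 0: x_{i+1} of the paper is [nth _ (map fst w) i]. *)

Section Automata.
Variables (S : pzSemiRingType) (A X Y : finType).

Definition delta_word (delta : A -> X -> A) (u : seq X) (a : A) : A :=
  foldl delta a u.

Definition sigma_cd (a0 : A) (a : A) : S := if a == a0 then 1 else 0.

Definition hatd (delta : A -> X -> A) (x : X) (a b : A) : S :=
  if b == delta a x then 1 else 0.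

Definition id_mxA (a b : A) : S := if a == b then 1 else 0.

Definition mxmulA (M N : A -> A -> S) (a b : A) : S := \sum_(c : A) M a c * N c b.

Definition hatd_word (delta : A -> X -> A) (u : seq X) : A -> A -> S :=
  foldr (fun x M => mxmulA (hatd delta x) M) id_mxA u.

Definition mealy_cd (a0 : A) (delta : A -> X -> A) (omega : A -> X -> Y -> S)
    (w : seq (X * Y)) : S :=
  match w with
  | [::] => 1
  | p :: _ =>
    let n := size w in
    let xs := map fst w in
    let x i := nth p.1 xs i in
    let y i := nth p.2 (map snd w) i in
    \prod_(0 <= i < n) omega (delta_word delta (take i xs) a0) (x i) (y i)
  end.

Definition mealy_1n (a0 : A) (delta : A -> X -> A) (omega : A -> X -> Y -> S)
    (w : seq (X * Y)) : S :=
  match w with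
  | [::] => \sum_(a : A) sigma_cd a0 a
  | p :: _ =>
    let n := size w in
    let xs := map fst w in
    let x i := nth p.1 xs i in
    let y i := nth p.2 (map snd w) i in
    \sum_(t : n.-tuple A)
      let s i := nth a0 t i in
      sigma_cd a0 (s 0%N)
      * (\prod_(0 <= i < n.-1)
           (omega (s i) (x i) (y i) * hatd delta (x i) (s i) (s i.+1)))
      * omega (s n.-1) (x n.-1) (y n.-1)
  end.

Definition mealy_n1 (a0 : A) (delta : A -> X -> A) (omega : A -> X -> Y -> S)
    (w : seq (X * Y)) : S :=
  match w with
  | [::] => \sum_(a : A) sigma_cd a0 a
  | p :: _ =>
    let n := size w in
    let xs := map fst w in
    let x i := nth p.1 xs i in
    let y i := nth p.2 (map snd w) i in
    \sum_(t : n.-tuple A)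
      let s i := nth a0 t i in
      sigma_cd a0 (s 0%N) * omega (s 0%N) (x 0%N) (y 0%N)
      * \prod_(1 <= i < n)
           (hatd_word delta (take i xs) (s 0%N) (s i) * omega (s i) (x i) (y i))
  end.

Definition mealy_s (a0 : A) (delta : A -> X -> A) (omega : A -> X -> Y -> S)
    (w : seq (X * Y)) : S :=
  match w with
  | [::] => \sum_(a : A) sigma_cd a0 a
  | p :: _ =>
    let n := size w in
    let xs := map fst w in
    let x i := nth p.1 xs i in
    let y i := nth p.2 (map snd w) i in
    \sum_(t : n.+1.-tuple A)
      let s i := nth a0 t i in
      sigma_cd a0 (s 0%N)
      * \prod_(0 <= i < n)
           (omega (s i) (x i) (y i) * hatd delta (x i) (s i) (s i.+1))
  end.

Definition moore_cd (a0 : A) (delta : A -> X -> A) (omega : A -> Y -> S)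
    (w : seq (X * Y)) : S :=
  match w with
  | [::] => 1
  | p :: _ =>
    let n := size w in
    let xs := map fst w in
    let y i := nth p.2 (map snd w) i in
    \prod_(0 <= i < n) omega (delta_word delta (take i.+1 xs) a0) (y i)
  end.

Definition moore_1n (a0 : A) (delta : A -> X -> A) (omega : A -> Y -> S)
    (w : seq (X * Y)) : S :=
  match w with
  | [::] => \sum_(a : A) sigma_cd a0 a
  | p :: _ =>
    let n := size w in
    let xs := map fst w in
    let x i := nth p.1 xs i in
    let y i := nth p.2 (map snd w) i in
    \sum_(t : n.+1.-tuple A)
      let s i := nth a0 t i in
      sigma_cd a0 (s 0%N)
      * \prod_(0 <= i < n)
           (hatd delta (x i) (s i) (s i.+1) * omega (s i.+1) (y i))
  end.

Definition moore_n1 (a0 : A) (delta : A -> X -> A) (omega : A -> Y -> S)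
    (w : seq (X * Y)) : S :=
  match w with
  | [::] => \sum_(a : A) sigma_cd a0 a
  | p :: _ =>
    let n := size w in
    let xs := map fst w in
    let y i := nth p.2 (map snd w) i in
    \sum_(t : n.+1.-tuple A)
      let s i := nth a0 t i in
      sigma_cd a0 (s 0%N)
      * \prod_(0 <= i < n)
           (hatd_word delta (take i.+1 xs) (s 0%N) (s i.+1) * omega (s i.+1) (y i))
  end.

End Automata.

(* In every behaviour the state tuples are summed against [sigma_cd] and
   transition weights that are 0 or 1, so a tuple contributes only if it is
   the run of the deterministic automaton from [a0]: at the first position
   where a tuple leaves the run, either the initial weight or the transition
   weight into that position vanishes.  The surviving term is the
   crisp-deterministic product. *)
From HB Require Import structures.
From mathcomp Require Import all_boot all_order all_algebra.
Set Implicit Arguments.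
Unset Strict Implicit.
Unset Printing Implicit Defensive.
Import GRing.Theory.
Local Open Scope ring_scope.

Section SumOverRun.
Variables (S : pzSemiRingType) (A : finType).

Lemma prod_nat_eq0 lo hi k (F : nat -> S) :
  (lo <= k < hi)%N -> F k = 0 -> \prod_(lo <= i < hi) F i = 0.
Proof.
case/andP=> lo_k k_hi Fk0.
by rewrite (big_cat_nat lo_k (ltnW k_hi)) /= (big_ltn k_hi) Fk0 mul0r mulr0.
Qed.

Lemma nth_mktuple_nat (a0 : A) m (r : nat -> A) i :
  (i < m)%N -> nth a0 [tuple r i | i < m] i = r i.
Proof. by move=> lt_im; rewrite -[i]/(nat_of_ord (Ordinal lt_im)) nth_mktuple. Qed.

Lemma first_deviation (a0 : A) m (t : m.-tuple A) (r : nat -> A) :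
  t != [tuple r i | i < m] ->
  exists2 j, (j < m)%N /\ nth a0 t j != r j
           & forall k, (k < j)%N -> nth a0 t k = r k.
Proof.
move=> t_neq.
have ex_dev : exists j, (j < m)%N && (nth a0 t j != r j).
  case: (boolP [exists i : 'I_m, nth a0 t i != r i]) => [/existsP[i dev_i] | /existsPn t_eq].
    by exists i; rewrite ltn_ord dev_i.
  case/eqP: t_neq; apply: eq_from_tnth => i.
  rewrite tnth_mktuple (tnth_nth a0).
  by move/negPn/eqP: (t_eq i).
case: (ex_minnP ex_dev) => j /andP[lt_jm dev_j] min_j; exists j => // k lt_kj.
apply/eqP/negPn/negP => dev_k.
by have := min_j k; rewrite dev_k (ltn_trans lt_kj lt_jm) leqNgt lt_kj => /(_ isT).
Qed.

Lemma sum_tuple_run (a0 : A) m (r : nat -> A) (F : m.-tuple A -> S) :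
  (forall (t : m.-tuple A) j, (j < m)%N -> nth a0 t j != r j ->
     (forall k, (k < j)%N -> nth a0 t k = r k) -> F t = 0) ->
  \sum_(t : m.-tuple A) F t = F [tuple r i | i < m].
Proof.
move=> F_dev; rewrite (bigD1 [tuple r i | i < m]) //= big1 ?addr0 // => t.
by move=> /(first_deviation a0) [j [lt_jm dev_j]] /(F_dev t j lt_jm dev_j).
Qed.

Lemma sigma_cd_eq0 (a0 a : A) : a != a0 -> sigma_cd S a0 a = 0.
Proof. by rewrite /sigma_cd => /negbTE->. Qed.

Lemma sum_sigma_cd (a0 : A) : \sum_(a : A) sigma_cd S a0 a = 1.
Proof.
rewrite (bigD1 a0) //= big1 ?addr0; first by rewrite /sigma_cd eqxx.
by move=> a /sigma_cd_eq0.
Qed.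

End SumOverRun.

Section Run.
Variables (S : pzSemiRingType) (A X : finType) (delta : A -> X -> A).

Definition run (a0 : A) (xs : seq X) (i : nat) : A :=
  delta_word delta (take i xs) a0.

Lemma run0 a0 xs : run a0 xs 0 = a0.
Proof. by rewrite /run take0. Qed.

Lemma runS (x0 : X) a0 xs i :
  (i < size xs)%N -> run a0 xs i.+1 = delta (run a0 xs i) (nth x0 xs i).
Proof. by move=> lt_i; rewrite /run (take_nth x0 lt_i) /delta_word foldl_rcons. Qed.

Lemma hatd_wordE u a b :
  hatd_word S delta u a b = if b == delta_word delta u a then 1 else 0.
Proof.
elim: u a => [|x u IHu] a /=; first by rewrite /id_mxA eq_sym.
rewrite /mxmulA (bigD1 (delta a x)) //= /hatd eqxx mul1r IHu big1 ?addr0 //.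
by move=> c /negbTE->; rewrite mul0r.
Qed.

Lemma hatd_word_run a0 xs i b :
  hatd_word S delta (take i xs) a0 b = if b == run a0 xs i then 1 else 0.
Proof. exact: hatd_wordE. Qed.

Variables (a0 : A) (xs : seq X) (x0 : X) (m : nat).
Hypothesis size_xs : size xs = m.+1.

Local Notation r := (run a0 xs).

Lemma hatd_run_step i :
  (i < m.+1)%N -> hatd S delta (nth x0 xs i) (r i) (r i.+1) = 1.
Proof. by move=> lt_i; rewrite /hatd (runS x0) ?size_xs // eqxx. Qed.

Lemma hatd_off_run i (b : A) :
  (i < m.+1)%N -> b != r i.+1 -> hatd S delta (nth x0 xs i) (r i) b = 0.
Proof. by move=> lt_i; rewrite /hatd -(runS x0) ?size_xs // => /negbTE->. Qed.

Lemma sum_mealy_1n (W : nat -> A -> S) :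
  \sum_(t : m.+1.-tuple A)
    (sigma_cd S a0 (nth a0 t 0)
     * \prod_(0 <= i < m) (W i (nth a0 t i)
                           * hatd S delta (nth x0 xs i) (nth a0 t i) (nth a0 t i.+1))
     * W m (nth a0 t m))
  = \prod_(0 <= i < m.+1) W i (r i).
Proof.
rewrite (sum_tuple_run (a0 := a0) (r := r)) => [|t [|j] lt_j dev_j pre_j].
- rewrite !nth_mktuple_nat // run0 /sigma_cd eqxx mul1r big_nat_recr //=.
  congr (_ * _); apply: eq_big_nat => i /andP[_ lt_im].
  have lt_i : (i < m.+1)%N := ltnW lt_im.
  have lt_Si : (i.+1 < m.+1)%N := lt_im.
  by rewrite !nth_mktuple_nat // hatd_run_step ?mulr1.
- by rewrite run0 in dev_j; rewrite (sigma_cd_eq0 _ dev_j) !mul0r.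
- rewrite (@prod_nat_eq0 _ 0 m j) ?mulr0 ?mul0r //.
  by rewrite (pre_j j (ltnSn j)) (hatd_off_run (ltnW lt_j) dev_j) mulr0.
Qed.

Lemma sum_mealy_n1 (W : nat -> A -> S) :
  \sum_(t : m.+1.-tuple A)
    (sigma_cd S a0 (nth a0 t 0) * W 0%N (nth a0 t 0)
     * \prod_(1 <= i < m.+1) (hatd_word S delta (take i xs) (nth a0 t 0) (nth a0 t i)
                              * W i (nth a0 t i)))
  = \prod_(0 <= i < m.+1) W i (r i).
Proof.
rewrite (sum_tuple_run (a0 := a0) (r := r)) => [|t [|j] lt_j dev_j pre_j].
- rewrite !nth_mktuple_nat // run0 /sigma_cd eqxx mul1r [RHS]big_ltn // run0.
  congr (_ * _); apply: eq_big_nat => i /andP[_ lt_i].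
  by rewrite !nth_mktuple_nat // ?run0 hatd_word_run eqxx mul1r.
- by rewrite run0 in dev_j; rewrite (sigma_cd_eq0 _ dev_j) !mul0r.
- rewrite (@prod_nat_eq0 _ 1 m.+1 j.+1) ?mulr0 //.
  by rewrite (pre_j 0 (ltn0Sn j)) run0 hatd_word_run (negbTE dev_j) mul0r.
Qed.

Lemma sum_mealy_s (W : nat -> A -> S) :
  \sum_(t : m.+2.-tuple A)
    (sigma_cd S a0 (nth a0 t 0)
     * \prod_(0 <= i < m.+1) (W i (nth a0 t i)
                              * hatd S delta (nth x0 xs i) (nth a0 t i) (nth a0 t i.+1)))
  = \prod_(0 <= i < m.+1) W i (r i).
Proof.
rewrite (sum_tuple_run (a0 := a0) (r := r)) => [|t [|j] lt_j dev_j pre_j].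
- rewrite !nth_mktuple_nat // run0 /sigma_cd eqxx mul1r.
  apply: eq_big_nat => i /andP[_ lt_i].
  have lt_i2 : (i < m.+2)%N := ltnW lt_i.
  have lt_Si : (i.+1 < m.+2)%N := lt_i.
  by rewrite !nth_mktuple_nat // hatd_run_step ?mulr1.
- by rewrite run0 in dev_j; rewrite (sigma_cd_eq0 _ dev_j) mul0r.
- rewrite (@prod_nat_eq0 _ 0 m.+1 j) ?mulr0 //.
  by rewrite (pre_j j (ltnSn j)) (hatd_off_run lt_j dev_j) mulr0.
Qed.

Lemma sum_moore_1n (V : nat -> A -> S) :
  \sum_(t : m.+2.-tuple A)
    (sigma_cd S a0 (nth a0 t 0)
     * \prod_(0 <= i < m.+1) (hatd S delta (nth x0 xs i) (nth a0 t i) (nth a0 t i.+1)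
                              * V i (nth a0 t i.+1)))
  = \prod_(0 <= i < m.+1) V i (r i.+1).
Proof.
rewrite (sum_tuple_run (a0 := a0) (r := r)) => [|t [|j] lt_j dev_j pre_j].
- rewrite !nth_mktuple_nat // run0 /sigma_cd eqxx mul1r.
  apply: eq_big_nat => i /andP[_ lt_i].
  have lt_i2 : (i < m.+2)%N := ltnW lt_i.
  have lt_Si : (i.+1 < m.+2)%N := lt_i.
  by rewrite !nth_mktuple_nat // hatd_run_step ?mul1r.
- by rewrite run0 in dev_j; rewrite (sigma_cd_eq0 _ dev_j) mul0r.
- rewrite (@prod_nat_eq0 _ 0 m.+1 j) ?mulr0 //.
  by rewrite (pre_j j (ltnSn j)) (hatd_off_run lt_j dev_j) mul0r.
Qed.

Lemma sum_moore_n1 (V : nat -> A -> S) :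
  \sum_(t : m.+2.-tuple A)
    (sigma_cd S a0 (nth a0 t 0)
     * \prod_(0 <= i < m.+1) (hatd_word S delta (take i.+1 xs) (nth a0 t 0) (nth a0 t i.+1)
                              * V i (nth a0 t i.+1)))
  = \prod_(0 <= i < m.+1) V i (r i.+1).
Proof.
rewrite (sum_tuple_run (a0 := a0) (r := r)) => [|t [|j] lt_j dev_j pre_j].
- rewrite !nth_mktuple_nat // run0 /sigma_cd eqxx mul1r.
  apply: eq_big_nat => i /andP[_ lt_i].
  by rewrite !nth_mktuple_nat // ?run0 hatd_word_run eqxx mul1r.
- by rewrite run0 in dev_j; rewrite (sigma_cd_eq0 _ dev_j) mul0r.
- rewrite (@prod_nat_eq0 _ 0 m.+1 j) ?mulr0 //.
  by rewrite (pre_j 0 (ltn0Sn j)) run0 hatd_word_run (negbTE dev_j) mul0r.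
Qed.

End Run.

Section Behaviours.
Variables (S : pzSemiRingType) (A X Y : finType) (a0 : A) (delta : A -> X -> A).

Section Mealy.
Variable omega : A -> X -> Y -> S.

Let weight p w i a :=
  omega a (nth p.1 (map fst (p :: w)) i) (nth p.2 (map snd (p :: w)) i).

Lemma mealy_1n_cd w : mealy_1n a0 delta omega w = mealy_cd a0 delta omega w.
Proof.
case: w => [|p w]; first exact: sum_sigma_cd.
have size_xs : size (map fst (p :: w)) = (size w).+1 by rewrite size_map.
exact: (sum_mealy_1n delta a0 p.1 size_xs (weight p w)).
Qed.

Lemma mealy_n1_cd w : mealy_n1 a0 delta omega w = mealy_cd a0 delta omega w.
Proof.
case: w => [|p w]; first exact: sum_sigma_cd.
exact: (sum_mealy_n1 delta a0 (map fst (p :: w)) (size w) (weight p w)).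
Qed.

Lemma mealy_s_cd w : mealy_s a0 delta omega w = mealy_cd a0 delta omega w.
Proof.
case: w => [|p w]; first exact: sum_sigma_cd.
have size_xs : size (map fst (p :: w)) = (size w).+1 by rewrite size_map.
exact: (sum_mealy_s delta a0 p.1 size_xs (weight p w)).
Qed.

End Mealy.

Section Moore.
Variable omega : A -> Y -> S.

Let weight (p : X * Y) w i a := omega a (nth p.2 (map snd (p :: w)) i).

Lemma moore_1n_cd w : moore_1n a0 delta omega w = moore_cd a0 delta omega w.
Proof.
case: w => [|p w]; first exact: sum_sigma_cd.
have size_xs : size (map fst (p :: w)) = (size w).+1 by rewrite size_map.
exact: (sum_moore_1n delta a0 p.1 size_xs (weight p w)).
Qed.

Lemma moore_n1_cd w : moore_n1 a0 delta omega w = moore_cd a0 delta omega w.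
Proof.
case: w => [|p w]; first exact: sum_sigma_cd.
exact: (sum_moore_n1 delta a0 (map fst (p :: w)) (size w) (weight p w)).
Qed.

End Moore.
End Behaviours.

Theorem theorem7 (S : pzSemiRingType) (A X Y : finType)
    (hX : (0 < #|X|)%N) (hY : (0 < #|Y|)%N) :
  (forall (a0 : A) (delta : A -> X -> A) (omega : A -> X -> Y -> S),
     forall w : seq (X * Y),
       mealy_cd a0 delta omega w = mealy_1n a0 delta omega w /\
       mealy_1n a0 delta omega w = mealy_n1 a0 delta omega w /\
       mealy_n1 a0 delta omega w = mealy_s a0 delta omega w) /\
  (forall (a0 : A) (delta : A -> X -> A) (omega : A -> Y -> S),
     forall w : seq (X * Y),
       moore_cd a0 delta omega w = moore_1n a0 delta omega w /\
       moore_1n a0 delta omega w = moore_n1 a0 delta omega w).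
Proof.
split=> a0 delta omega w.
- by rewrite mealy_1n_cd mealy_n1_cd mealy_s_cd.
- by rewrite moore_1n_cd moore_n1_cd.
Qed.
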